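(* Assume $(TJ)$. Let $B$ be a ball of radius $r>0$, let $0<\rho\le r$, $\lambda\in\mathbb R$ and $\psi=\lambda\mathbf 1_B$. Then for every non-negative $f\in\mathcal F^{(\rho)}\cap L^\infty(M,\mu)$ and every $p\ge1$, $$\mathcal E^{(\rho)}(e^{-\psi}f,\,e^{\psi}f^{2p-1})\ge\frac1p\,\mathcal E^{(\rho)}(f^p),$$ where $\mathcal E^{(\rho)}(u)=\mathcal E^{(\rho)}(u,u)$.
   Context: $(M,d,\mu)$ is an ultra-metric measure space: $M$ is locally compact and separable, $d$ is an ultra-metric ($d(x,y)\le\max\{d(x,z),d(z,y)\}$), $\mu$ is a Radon measure with full support. Balls are $B(x,r)=\{y: d(x,y)\le r\}$. Let $j$ be a symmetric Radon measure on $(M\times M)\setminus\mathrm{diag}$ with $j(B,B^c)<\infty$ for every ball $B$; $\mathcal E(f,g)=\iint(f(x)-f(y))(g(x)-g(y))\,dj(x,y)$, $\mathcal F$ is the closure, in the norm $\sqrt{\mathcal E(u)+\|u\|_2^2}$, of finite linear combinations of indicators of disjoint compact balls. Fixed $\beta>0$, $R_0\in(0,\operatorname{diam}M]$. Condition $(TJ)$: there is a transition kernel $J(x,dy)$ with $dj(x,y)=J(x,dy)\,d\mu(x)$ and a constant $C$ with $J(x,B(x,r)^c)\le Cr^{-\beta}$ for all $x\in M$, $r\in(0,R_0)$. Truncated form: for $\rho>0$, $\mathcal E^{(\rho)}(u,v)=\int_M\int_{B(x,\rho)}(u(x)-u(y))(v(x)-v(y))\,J(x,dy)\,d\mu(x)$.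 Under $(TJ)$, its closure $(\mathcal E^{(\rho)},\mathcal F^{(\rho)})$ is a regular Dirichlet form on $L^2(M,\mu)$ given by the same formula, with $\mathcal F^{(\rho)}=\mathcal F$. *)

From HB Require Import structures.
From mathcomp Require Import all_boot all_order all_algebra.
From mathcomp Require Import all_classical all_reals all_analysis.
Set Implicit Arguments. Unset Strict Implicit. Unset Printing Implicit Defensive.
Import Order.TTheory GRing.Theory Num.Theory.
Local Open Scope classical_set_scope.
Local Open Scope ring_scope.

Section UltraMetricDefs.
Variables (R : realType) (dM : measure_display) (M : measurableType dM).
Variable (d : M -> M -> R).

Definition ultrametric : Prop :=
  (forall x y, 0 <= d x y) /\ (forall x y, d x y = 0 <-> x = y) /\
  (forall x y, d x y = d y x) /\
  (forall x y z, d x y <= Num.max (d x z) (d z y)).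

Definition dball (x : M) (r : R) : set M := [set y | d x y <= r].

Definition dopen (U : set M) : Prop :=
  forall x, U x -> exists r, 0 < r /\ dball x r `<=` U.

Definition dcompact (K : set M) : Prop :=
  forall (I : Type) (U : I -> set M), (forall i, dopen (U i)) ->
    K `<=` \bigcup_i U i ->
    exists F : set I, finite_set F /\ K `<=` \bigcup_(i in F) U i.

Definition dlocally_compact : Prop :=
  forall x, exists r, 0 < r /\ dcompact (dball x r).

Definition dseparable : Prop :=
  exists D : set M, countable D /\
    forall x e, 0 < e -> exists y, D y /\ d x y < e.

Definition ddiam : \bar R := ereal_sup (range (fun z : M * M => (d z.1 z.2)%:E)).

Definition borel_of_d : Prop := (@measurable _ M) = <<s dopen >>.

Local Open Scope ereal_scope.

(** Radon measure (M locally compact separable metric: = finite on compacts) *)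
Definition radon (mu : {measure set M -> \bar R}) : Prop :=
  forall K, measurable K -> dcompact K -> mu K < +oo.

Definition full_support (mu : {measure set M -> \bar R}) : Prop :=
  forall x (r : R), (0 < r)%R -> 0 < mu (dball x r).

Variables (mu : {measure set M -> \bar R}) (J : R.-ker M ~> M).

(** the jump measure dj(x,y) = J(x,dy) dmu(x) *)
Definition jmeas (A : set (M * M)) : \bar R :=
  \int[mu]_x J x [set y | A (x, y)].

Definition jsymmetric : Prop :=
  forall A : set (M * M), measurable A ->
    jmeas A = jmeas [set z | A (z.2, z.1)].

Definition joffdiag : Prop := jmeas [set z | z.1 = z.2] = 0.

(** j is Radon on (M x M) \ diag: finite on products of disjoint compacts *)
Definition jradon : Prop :=
  forall K1 K2 : set M, measurable K1 -> measurable K2 ->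
    dcompact K1 -> dcompact K2 -> K1 `&` K2 = set0 ->
    jmeas (K1 `*` K2) < +oo.

Definition jballs : Prop :=
  forall x (r : R), (0 < r)%R -> jmeas (dball x r `*` ~` dball x r) < +oo.

Definition TJ (beta R0 : R) : Prop :=
  exists C : R, forall x (r : R), (0 < r < R0)%R ->
    J x (~` dball x r) <= (C * r `^ (- beta))%:E.

Definition Eform (u : M -> R) : \bar R :=
  \int[mu]_x \int[J x]_y ((u x - u y) ^+ 2)%:E.

Definition Erho (rho : R) (u v : M -> R) : \bar R :=
  \int[mu]_x \int[J x]_(y in dball x rho) ((u x - u y) * (v x - v y))%:E.

Definition dstep (u : M -> R) : Prop :=
  exists (n : nat) (c : 'I_n -> R) (x0 : 'I_n -> M) (r : 'I_n -> R),
    (forall i, (0 < r i)%R /\ dcompact (dball (x0 i) (r i))) /\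
    (forall i j, i != j -> dball (x0 i) (r i) `&` dball (x0 j) (r j) = set0) /\
    u = (fun x => \sum_(i < n) c i * \1_(dball (x0 i) (r i)) x)%R.

Definition dirF (u : M -> R) : Prop :=
  measurable_fun setT u /\
  \int[mu]_x ((u x) ^+ 2)%:E < +oo /\
  exists un : nat -> M -> R, (forall n, dstep (un n)) /\
    (fun n => Eform (fun x => un n x - u x)%R +
              \int[mu]_x ((un n x - u x) ^+ 2)%:E) @ \oo --> 0.

Definition Linfty (u : M -> R) : Prop :=
  measurable_fun setT u /\ exists C : R, {ae mu, forall x, (`|u x| <= C)%R}.

End UltraMetricDefs.

From HB Require Import structures.
From mathcomp Require Import all_boot all_order all_algebra.
From mathcomp Require Import all_classical all_reals all_analysis.
From mathcomp Require Import ring lra.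
Import Order.TTheory GRing.Theory Num.Theory.
Local Open Scope classical_set_scope.
Local Open Scope ring_scope.

(* Since [rho <= r] and [d] is an ultra-metric, a jump of length at most [rho]
   never leaves or enters the ball [B(x0, r)], so [psi = lambda 1_B] takes the
   same value at both ends and the factors [exp(-psi)], [exp(psi)] cancel in
   every integrand of [E^(rho)].  The theorem then reduces to the elementary
   inequality [(a^p - b^p)^2 <= p (a - b) (a^(2p-1) - b^(2p-1))] for [a, b >= 0],
   a consequence of Young's inequality, integrated twice. *)

Lemma ge0_integral_scale_le d (T : measurableType d) (R : realType)
    (mu : {measure set T -> \bar R}) (D : set T) (c : R) (f g : T -> \bar R) :
  0 < c -> (forall x, D x -> (0 <= f x)%E) ->
  (forall x, D x -> (c%:E * f x <= g x)%E) ->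
  (c%:E * \int[mu]_(x in D) f x <= \int[mu]_(x in D) g x)%E.
Proof.
move=> c0 f0 fg.
have g0 x : D x -> (0 <= g x)%E.
  move=> Dx; apply: le_trans (fg x Dx).
  by apply: mule_ge0; [rewrite lee_fin ltW|exact: f0].
rewrite (ge0_integralE mu f0) (ge0_integralE mu g0).
rewrite -lee_pdivlMl //; apply: ge_ereal_sup => _ [h /= hf <-].
rewrite lee_pdivlMl // -sintegralrM; apply: ereal_sup_ubound => /=.
exists (scale_nnsfun h (ltW c0)) => //= x.
move: (hf x); rewrite /patch; case: ifPn => [/[!inE] Dx hfx|_ hx0].
  by rewrite EFinM; apply: le_trans (fg x Dx); rewrite lee_pmul2l ?lte_fin.
by rewrite lee_fin pmulr_rle0 // -lee_fin.
Qed.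

Section PowerInequalities.
Variable R : realType.
Implicit Types a b p s : R.

Lemma powR_young_pred a b p : 0 <= a -> 0 <= b -> 1 <= p ->
  p * (a `^ (p - 1) * b) <= (p - 1) * a `^ p + b `^ p.
Proof.
move=> a0 b0 p1.
have [->|p_neq1] := eqVneq p 1.
  by rewrite subrr powRr0 !mul1r mul0r add0r powRr1.
have p_gt1 : 1 < p by rewrite lt_neqAle eq_sym p_neq1.
have p0 : 0 < p by apply: lt_trans p_gt1.
have pm0 : 0 < p - 1 by rewrite subr_gt0.
(* Young's inequality with the conjugate exponents [p / (p - 1)] and [p]. *)
have q0 : 0 < p / (p - 1) by rewrite divr_gt0.
have pq : (p / (p - 1))^-1 + p^-1 = 1 by rewrite invf_div; field; rewrite gt_eqF.
have := conjugate_powR (powR_ge0 a (p - 1)) b0 q0 p0 pq.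
rewrite -powRrM mulrCA divff ?gt_eqF // mulr1.
have -> : a `^ p / (p / (p - 1)) + b `^ p / p = ((p - 1) * a `^ p + b `^ p) / p.
  by field; rewrite !gt_eqF.
by rewrite ler_pdivlMr // mulrC.
Qed.

Lemma powR_sub_le a b p : 0 <= b -> b <= a -> 1 <= p ->
  a `^ p - b `^ p <= p * a `^ (p - 1) * (a - b).
Proof.
move=> b0 ba p1.
have a0 : 0 <= a := le_trans b0 ba.
have p0 : 0 < p by apply: lt_le_trans p1.
have := @powR_young_pred a b p a0 b0 p1.
have <- : a * a `^ (p - 1) = a `^ p by rewrite mulr_powRB1.
lra.
Qed.

Lemma powR_sub_sqr_le_ord a b p : 0 <= b -> b <= a -> 1 <= p ->
  (a `^ p - b `^ p) ^+ 2
  <= p * ((a - b) * (a `^ (2 * p - 1) - b `^ (2 * p - 1))).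
Proof.
move=> b0 ba p1.
have a0 : 0 <= a := le_trans b0 ba.
have p0 : 0 < p by apply: lt_le_trans p1.
have split_exp : 2 * p - 1 = (p - 1) + p by ring.
have q_neq0 : (p - 1) + p != 0 by rewrite -split_exp gt_eqF // subr_gt0; lra.
rewrite split_exp !(powRD (r := p - 1) (s := p)) ?(negbTE q_neq0) //.
have XY := @powR_sub_le a b p b0 ba p1.
have WP : b `^ (p - 1) <= a `^ (p - 1).
  by apply: ge0_ler_powR; rewrite ?nnegrE ?subr_ge0.
have YX : b `^ p <= a `^ p by apply: ge0_ler_powR; rewrite ?nnegrE // ltW.
have Y0 := powR_ge0 b p.
move: XY WP YX Y0.
set X := a `^ p; set Y := b `^ p; set P := a `^ (p - 1); set W := b `^ (p - 1).
move=> XY WP YX Y0.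
have PXY : P * (X - Y) <= P * X - W * Y by rewrite mulrBr lerD2l lerN2 ler_wpM2r.
have pab0 : 0 <= p * (a - b) by rewrite mulr_ge0 ?subr_ge0 // ltW.
apply: (le_trans (y := (X - Y) * (p * P * (a - b)))).
  by rewrite expr2 ler_wpM2l ?subr_ge0.
have -> : (X - Y) * (p * P * (a - b)) = p * (a - b) * (P * (X - Y)) by ring.
by rewrite [p * (_ * _)]mulrA ler_wpM2l.
Qed.

Lemma powR_sub_sqr_le a b p : 0 <= a -> 0 <= b -> 1 <= p ->
  (a `^ p - b `^ p) ^+ 2
  <= p * ((a - b) * (a `^ (2 * p - 1) - b `^ (2 * p - 1))).
Proof.
move=> a0 b0 p1; have [ba|/ltW ab] := leP b a; first exact: powR_sub_sqr_le_ord.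
have := @powR_sub_sqr_le_ord b a p a0 ab p1.
by rewrite -sqrrN opprB -[(b - a) * _]mulrNN !opprB.
Qed.

Lemma expR_twisted_powR_le a b s p : 0 <= a -> 0 <= b -> 1 <= p ->
  p^-1 * (a `^ p - b `^ p) ^+ 2 <=
  (expR (- s) * a - expR (- s) * b) *
  (expR s * a `^ (2 * p - 1) - expR s * b `^ (2 * p - 1)).
Proof.
move=> a0 b0 p1.
have p0 : 0 < p by apply: lt_le_trans p1.
rewrite -!mulrBr mulrACA expRN mulVf ?gt_eqF ?expR_gt0 // mul1r.
by rewrite ler_pdivrMl // powR_sub_sqr_le.
Qed.

End PowerInequalities.

Lemma ultrametric_indic_dball (R : realType) dT (T : measurableType dT)
    (d : T -> T -> R) (x0 x y : T) (r : R) :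
  (forall x y, d x y = d y x) ->
  (forall x y z, d x y <= Num.max (d x z) (d z y)) ->
  d x y <= r -> \1_(dball d x0 r) x = \1_(dball d x0 r) y :> R.
Proof.
move=> dC dU dxy.
have ball_stable u v : d u v <= r -> dball d x0 r u -> dball d x0 r v.
  by move=> duv x0u; apply: le_trans (dU x0 v u) _; rewrite ge_max x0u.
rewrite !indicE; congr (nat_of_bool _)%:R.
by apply/idP/idP => /set_mem B; apply/mem_set; apply: ball_stable B; rewrite // dC.
Qed.

Section TruncatedForm.
Variables (R : realType) (dM : measure_display) (M : measurableType dM).
Variables (d : M -> M -> R) (mu : {measure set M -> \bar R}) (J : R.-ker M ~> M).

Lemma Erho_scale_le (rho c : R) (u v u' v' : M -> R) :
  0 < c ->
  (forall x y, d x y <= rho -> 0 <= (u x - u y) * (v x - v y)) ->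
  (forall x y, d x y <= rho ->
     c * ((u x - u y) * (v x - v y)) <= (u' x - u' y) * (v' x - v' y)) ->
  (c%:E * Erho d mu J rho u v <= Erho d mu J rho u' v')%E.
Proof.
move=> c0 uv0 uv_le; apply: ge0_integral_scale_le => // x _.
  by apply: integral_ge0 => y; rewrite lee_fin; exact: uv0.
by apply: ge0_integral_scale_le => // y; rewrite lee_fin; [exact: uv0|exact: uv_le].
Qed.

End TruncatedForm.

Theorem corollary1 (R : realType) (dM : measure_display) (M : measurableType dM)
  (d : M -> M -> R) (mu : {measure set M -> \bar R}) (J : R.-ker M ~> M)
  (beta R0 : R) :
  ultrametric d -> borel_of_d d -> dlocally_compact d -> dseparable d ->
  radon d mu -> full_support d mu ->
  jsymmetric mu J -> joffdiag mu J -> jradon d mu J -> jballs d mu J ->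
  0 < beta -> 0 < R0 -> (R0%:E <= ddiam d)%E ->
  TJ d J beta R0 ->
  forall (x0 : M) (r rho lambda p : R) (f : M -> R),
    0 < r -> 0 < rho -> rho <= r -> 1 <= p ->
    (forall x, 0 <= f x) -> dirF d mu J f -> Linfty mu f ->
    ((p^-1)%:E * Erho d mu J rho (fun x => f x `^ p)%R (fun x => f x `^ p)%R
     <= Erho d mu J rho
          (fun x => expR (- (lambda * \1_(dball d x0 r) x)) * f x)%R
          (fun x => expR (lambda * \1_(dball d x0 r) x) * f x `^ (2 * p - 1))%R)%E.
Proof.
move=> [_ [_ [dC dU]]] _ _ _ _ _ _ _ _ _ _ _ _ _ x0 r rho lambda p f _ _ rho_r p1
  f0 _ _.
apply: Erho_scale_le => [|x y _|x y dxy]; first by rewrite invr_gt0; lra.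
  by rewrite -expr2 sqr_ge0.
rewrite (@ultrametric_indic_dball _ _ _ _ x0 x y r dC dU (le_trans dxy rho_r)).
by rewrite -expr2; apply: expR_twisted_powR_le.
Qed.
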